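(* For $1\le i<r$, \[ C_{i+1,r}(a)=C_{i,r}(a)+\sum_{k=r-i+1}^{r-1}C_{r-i+1,k}(a)\,C_{r-k,r-k}(a)-\sum_{k=i}^{r-1}C_{i,k}(a)\,C_{r-k,r-k}(a) \] as polynomials in $a$.
   Context: Bernoulli polynomials $B_n(a)$: $\sum_{n\ge0}B_n(a)x^n/n!=xe^{ax}/(e^x-1)$. For $1\le i\le r$, let $S_{i,r}$ be the set of $(n_1,\dots,n_r)\in\mathbb Z_{\ge0}^r$ with $n_1+\dots+n_r=r$, $n_1+\dots+n_j<j$ ($1\le j<i$), and $n_{j+1}+\dots+n_r\le r-j$ ($i\le j<r$), and set $C_{i,r}(a)=(-1)^r\sum_{(n_1,\dots,n_r)\in S_{i,r}}\prod_{j=1}^r\frac{B_{n_j}(a)}{n_j!}$. (These are the asymptotic coefficients at the origin of the Hurwitz multiple zeta function with all parameters equal to $a$.) *)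

From HB Require Import structures.
From mathcomp Require Import all_boot all_order all_algebra.
Unset Printing Implicit Defensive.
Import Order.TTheory GRing.Theory Num.Theory.
Local Open Scope ring_scope.

(* The generating function
   sum_n B_n(a) x^n/n! = x e^{ax}/(e^x-1), i.e.
   (sum_n B_n(a) x^n/n!) (e^x - 1) = x e^{ax}, is equivalent (comparing the
   coefficients of x^{n+1}/(n+1)!) to
     sum_{k=0}^{n} C(n+1,k) B_k(a) = (n+1) a^n      for all n >= 0,
   which determines B_n recursively:
     B_n = a^n - 1/(n+1) sum_{k<n} C(n+1,k) B_k. *)
Fixpoint bernp_seq (n : nat) : seq {poly rat} :=
  match n with
  | 0 => [:: 1]
  | m.+1 =>
      let s := bernp_seq m in
      rcons s ('X^(m.+1) - (m.+2%:R)^-1 *: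
                 \sum_(k < m.+1) ('C(m.+2, k))%:R *: s`_k)
  end.

Definition bernp (n : nat) : {poly rat} := nth 0 (bernp_seq n) n.

(* S_{i,r}: tuples (n_1,...,n_r) (stored 0-based as n : 'I_r -> nat;
   entries are bounded by r since they sum to r) with
   n_1+...+n_r = r,
   n_1+...+n_j < j           for 1 <= j < i,
   n_{j+1}+...+n_r <= r - j  for i <= j < r. *)
Definition inS (i r : nat) (n : {ffun 'I_r -> 'I_r.+1}) : bool :=
  [&& (\sum_(l < r) (n l : nat) == r)%N,
      [forall j : 'I_r, ((1 <= j) && (j < i))%N ==>
         (\sum_(l < r | (l < j)%N) (n l : nat) < j)%N]
    & [forall j : 'I_r, ((1 <= j) && (i <= j))%N ==>
         (\sum_(l < r | (j <= l)%N) (n l : nat) <= r - j)%N]].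

Definition Ccoef (i r : nat) : {poly rat} :=
  (-1) ^+ r * \sum_(n : {ffun 'I_r -> 'I_r.+1} | inS i r n)
                \prod_(j < r) (((n j)`!)%:R^-1 *: bernp (n j)).

From HB Require Import structures.
From mathcomp Require Import all_boot all_order all_algebra.
From mathcomp Require Import zify.
Import Order.TTheory GRing.Theory Num.Theory.

(* Read a tuple (n_1, ..., n_r) as a lattice path with heights
   p_j = n_1 + ... + n_j: S_{i,r} consists of the paths of total height r that
   stay strictly below the diagonal at steps 1, ..., i - 1 and weakly above it
   from step i on.  Let G(a, b) be the sum over S_{a+1,a+b+1} of the weights
   prod_j w(n_j) (here w(m) = B_m/m!, but any weights work), and Z(a, b) the
   same sum with the strict inequalities relaxed.  Three bijections give
   - Z(a, b) = Z(b, a), by reversing the path;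
   - Z(a, b) = G(a, b) + sum_{c<a} G(c, 0) Z(a-1-c, b), by cutting the path at
     its first return to the diagonal;
   - G(a, b) = G(b+1, a-1) for a >= 1, by keeping the first step (necessarily
     0) and reversing the others.
   Expanding with the second identity twice and using the first shows that
   G(a, b) + sum_{j<a} G(b, j) G(a-1-j, 0) is symmetric in a and b; with the
   third identity this is exactly the recurrence, up to the sign (-1)^r. *)

Fixpoint bounded_seqs (r M : nat) : seq (seq nat) :=
  if r is r'.+1 then [seq x :: s | x <- iota 0 M, s <- bounded_seqs r' M] else [:: [::]].

Lemma mem_bounded_seqs r M s :
  (s \in bounded_seqs r M) = (size s == r) && all (fun x => x < M) s.
Proof.
elim: r s => [|r IH] s /=; first by rewrite inE; case: s.
apply/allpairsP/idP => [[[y t] /= [+ + ->]]|].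
  by rewrite mem_iota IH /= eqSS => -> ->.
case: s => [|x s] //= /and3P[/eqP [sr] xM sM].
by exists (x, s); split; rewrite ?mem_iota // IH sr eqxx.
Qed.

Lemma bounded_seqs_uniq r M : uniq (bounded_seqs r M).
Proof.
elim: r => [|r IH] //=; apply: allpairs_uniq => //; first exact: iota_uniq.
by move=> [x s] [y t] _ _ /= [-> ->].
Qed.

Section BoundedSeqSums.
Context {R : nmodType}.
Local Open Scope ring_scope.

Lemma big_bounded_seqs_cat k l M (F : seq nat -> R) :
  \sum_(s <- bounded_seqs (k + l) M) F s =
  \sum_(s1 <- bounded_seqs k M) \sum_(s2 <- bounded_seqs l M) F (s1 ++ s2).
Proof.
elim: k F => [|k IH] F /=; first by rewrite big_seq1.
by rewrite !big_allpairs_dep; apply: eq_bigr => x _; rewrite IH.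
Qed.

Lemma big_bounded_seqs_involution {r M} {f : seq nat -> seq nat} (F : seq nat -> R) :
  involutive f -> (forall s, (f s \in bounded_seqs r M) = (s \in bounded_seqs r M)) ->
  \sum_(s <- bounded_seqs r M) F s = \sum_(s <- bounded_seqs r M) F (f s).
Proof.
move=> fK f_bounded_seqs; rewrite -(big_map f xpredT F); apply: perm_big.
have f_inj := inv_inj fK.
apply: uniq_perm; rewrite ?map_inj_uniq ?bounded_seqs_uniq // => s.
by rewrite -{2}(fK s) mem_map ?f_bounded_seqs.
Qed.

Lemma big_bounded_seqs_widen {r M M'} (P : pred (seq nat)) (F : seq nat -> R) :
  (M <= M')%N -> (forall s, P s -> all (fun x => x < M)%N s) ->
  \sum_(s <- bounded_seqs r M' | P s) F s = \sum_(s <- bounded_seqs r M | P s) F s.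
Proof.
move=> leMM' PM; rewrite -big_filter -[RHS]big_filter; apply: perm_big.
apply: uniq_perm; rewrite ?filter_uniq ?bounded_seqs_uniq // => s.
rewrite !mem_filter !mem_bounded_seqs; case Ps: (P s) => //=; have sM := PM s Ps.
rewrite sM andbT; case: (size s == r) => //=.
by apply/allP => x /(allP sM) xM; exact: leq_trans xM leMM'.
Qed.

End BoundedSeqSums.

Definition psum (s : seq nat) j := sumn (take j s).

Lemma psum0 s : psum s 0 = 0.
Proof. by rewrite /psum take0. Qed.

Lemma psum_take k s j : psum (take k s) j = psum s (minn j k).
Proof. by rewrite /psum take_min. Qed.

Lemma psumD_sumn_drop s j : psum s j + sumn (drop j s) = sumn s.
Proof. by rewrite /psum -sumn_cat cat_take_drop. Qed.

Lemma psum_drop k s j : psum (drop k s) j = psum s (k + j) - psum s k.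
Proof. by rewrite /psum takeD sumn_cat addKn. Qed.

Lemma psum_le_sumn s j : psum s j <= sumn s.
Proof. by rewrite -(psumD_sumn_drop s j) leq_addr. Qed.

Lemma psum_mono s : {homo psum s : j k / j <= k}.
Proof. by move=> j k /subnKC <-; rewrite /psum takeD sumn_cat leq_addr. Qed.

Lemma psum_oversize s j : size s <= j -> psum s j = sumn s.
Proof. by move=> ?; rewrite /psum take_oversize. Qed.

Lemma psum_rev s j : psum (rev s) j = sumn s - psum s (size s - j).
Proof.
by rewrite /psum take_rev sumn_rev -(psumD_sumn_drop s (size s - j)) addKn.
Qed.

Lemma psum_cons x s j : 0 < j -> psum (x :: s) j = x + psum s j.-1.
Proof. by case: j. Qed.

Lemma all_iotaP (P : pred nat) m n :
  reflect (forall j, m <= j < m + n -> P j) (all P (iota m n)).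
Proof.
by apply: (iffP allP) => H j; [move=> hj|rewrite mem_iota => hj]; apply: H;
  rewrite ?mem_iota.
Qed.

(* [Spath (i - 1) (r - i) s] encodes s \in S_{i,r}: as the total is r, the
   condition n_{j+1} + ... + n_r <= r - j reads j <= psum s j. *)
Definition Spath a b s :=
  [&& sumn s == a + b + 1, all (fun j => psum s j < j) (iota 1 a)
    & all (fun j => j <= psum s j) (iota a.+1 b)].

Definition Spath_weak a b s :=
  [&& sumn s == a + b + 1, all (fun j => psum s j <= j) (iota 1 a)
    & all (fun j => j <= psum s j) (iota a.+1 b)].

Definition off_diag c s := all (fun j => psum s j != j) (iota 1 c).

Lemma SpathE a b s : Spath a b s = Spath_weak a b s && off_diag a s.
Proof.
rewrite /Spath /Spath_weak /off_diag; case: (sumn s == _) => //=.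
case: (all _ (iota a.+1 b)); rewrite ?andbT ?andbF // -all_predI.
by apply: eq_all => j /=; rewrite ltn_neqAle andbC.
Qed.

Lemma Spath_weak_rev a b s :
  size s = a + b + 1 -> Spath_weak a b (rev s) = Spath_weak b a s.
Proof.
move=> size_s; rewrite /Spath_weak sumn_rev [b + a]addnC.
case/boolP: (sumn s == _) => //= /eqP sum_s; have le_sum := psum_le_sumn s.
apply/andP/andP => -[/all_iotaP H1 /all_iotaP H2]; split; apply/all_iotaP => j hj.
- have := H2 (size s - j); rewrite psum_rev subKn; last lia.
  by move=> /(_ ltac:(lia)); have := le_sum j; lia.
- have := H1 (size s - j); rewrite psum_rev subKn; last lia.
  by move=> /(_ ltac:(lia)); have := le_sum j; lia.
- by rewrite psum_rev; have := H2 (size s - j) ltac:(lia); have := le_sum (size s - j); lia.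
- by rewrite psum_rev; have := H1 (size s - j) ltac:(lia); have := le_sum (size s - j); lia.
Qed.

Definition Stail a b t :=
  all (fun k => psum t k <= k) (iota 0 a) && all (fun k => k < psum t k) (iota a b).

Lemma Spath_cons0 a b t : 1 <= a -> sumn t = a + b + 1 ->
  Spath a b (0 :: t) = Stail a b t.
Proof.
move=> a_gt0 sum_t; rewrite /Spath /Stail /= sum_t eqxx /=.
apply/andP/andP => -[/all_iotaP H1 /all_iotaP H2]; split; apply/all_iotaP => k hk.
- by have := H1 k.+1 ltac:(lia); rewrite psum_cons //=; lia.
- by have := H2 k.+1 ltac:(lia); rewrite psum_cons //=; lia.
- by rewrite psum_cons; last lia; have := H1 k.-1 ltac:(lia); lia.
- by rewrite psum_cons; last lia; have := H2 k.-1 ltac:(lia); lia.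
Qed.

Lemma Spath_cons0_rev a b t : 1 <= a -> size t = a + b -> sumn t = a + b + 1 ->
  Spath b.+1 a.-1 (0 :: rev t) = Stail a b t.
Proof.
move=> a_gt0 size_t sum_t; have le_sum := psum_le_sumn t; rewrite sum_t in le_sum.
rewrite /Spath /Stail [sumn _]/= add0n sumn_rev sum_t (_ : _ == _) ?andTb;
  last by apply/eqP; lia.
have top : psum t (a + b) = a + b + 1 by rewrite psum_oversize ?size_t.
(* reflecting the path through the centre of the square *)
have flip k : k <= a + b ->
    psum (0 :: rev t) (a + b + 1 - k) = a + b + 1 - psum t k.
  move=> hk; rewrite psum_cons; last lia.
  by rewrite add0n psum_rev size_t sum_t (_ : a + b - _ = k); last lia.
apply/andP/andP => -[/all_iotaP H1 /all_iotaP H2]; split; apply/all_iotaP => k hk.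
- case: (posnP k) => [->|k_gt0]; first by rewrite psum0.
  have := H2 (a + b + 1 - k) ltac:(lia); rewrite flip; last lia.
  by have := le_sum k; lia.
- have := H1 (a + b + 1 - k) ltac:(lia); rewrite flip; last lia.
  by have := le_sum k; lia.
- rewrite -[k](@subKn _ (a + b + 1)); last lia.
  rewrite flip; last lia.
  case: (ltnP (a + b + 1 - k) (a + b)) => hk'.
    by have := H2 (a + b + 1 - k) ltac:(lia); have := le_sum (a + b + 1 - k); lia.
  by rewrite (_ : a + b + 1 - k = a + b) ?top; lia.
- rewrite -[k](@subKn _ (a + b + 1)); last lia.
  rewrite flip; last lia.
  by have := H1 (a + b + 1 - k) ltac:(lia); have := le_sum (a + b + 1 - k); lia.
Qed.

Definition rev_tail (s : seq nat) := if s is x :: t then x :: rev t else [::].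

Lemma rev_tailK : involutive rev_tail.
Proof. by case => //= x t; rewrite revK. Qed.

Lemma Spath_rev_tail {a b} s : 1 <= a -> size s = a + b + 1 ->
  Spath a b s = Spath b.+1 a.-1 (rev_tail s).
Proof.
move=> a_gt0; case: s => [|x t] /= size_s; first lia.
(* a path in S starts with a zero step, since its first height is < 1 *)
have head0 u c d : 1 <= c -> 0 < x -> Spath c d (x :: u) = false.
  move=> c_gt0 x_gt0; apply/negP => /and3P[_ /all_iotaP /(_ 1 ltac:(lia)) + _].
  by rewrite psum_cons //=; lia.
case: (posnP x) => [->|x_gt0]; last by rewrite !head0.
have [sum_t|sum_t] := eqVneq (sumn t) (a + b + 1).
  by rewrite Spath_cons0 // Spath_cons0_rev //; lia.
rewrite /Spath /= sumn_rev (_ : b.+1 + a.-1 + 1 = a + b + 1); last lia.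
by rewrite (negbTE sum_t).
Qed.

(* Split a path at its first return c.+1 <= a to the diagonal. *)
Lemma Spath_weak_first_return a b c s : c < a ->
  Spath c 0 (take c.+1 s) && Spath_weak (a - c.+1) b (drop c.+1 s) =
  [&& Spath_weak a b s, off_diag c s & psum s c.+1 == c.+1].
Proof.
move=> lt_ca; have mono := psum_mono s; have le_sum := psum_le_sumn s.
have sum_drop : sumn (drop c.+1 s) = sumn s - psum s c.+1.
  by rewrite -(psumD_sumn_drop s c.+1) addKn.
rewrite /Spath /Spath_weak /off_diag sum_drop (_ : sumn (take _ s) = psum s c.+1) //.
apply/idP/idP.
- move=> /andP[/and3P[/eqP h1 /all_iotaP h2 _] /and3P[/eqP h4 /all_iotaP h5 /all_iotaP h6]].
  apply/and3P; split; last (apply/eqP; lia).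
  + apply/and3P; split.
    * by apply/eqP; have := le_sum c.+1; lia.
    * apply/all_iotaP => j hj; case: (ltnP c.+1 j) => cj.
        have := h5 (j - c.+1) ltac:(lia); rewrite psum_drop subnKC; last lia.
        by have := mono c.+1 j ltac:(lia); lia.
      case: (ltnP c j) => [cj'|cj']; first by rewrite (_ : j = c.+1); lia.
      by have := h2 j ltac:(lia); rewrite psum_take (_ : minn j c.+1 = j); lia.
    * apply/all_iotaP => j hj.
      have := h6 (j - c.+1) ltac:(lia); rewrite psum_drop subnKC; last lia.
      by have := mono c.+1 j ltac:(lia); lia.
  + apply/all_iotaP => j hj.
    by have := h2 j ltac:(lia); rewrite psum_take (_ : minn j c.+1 = j); lia.
- move=> /and3P[/and3P[/eqP h1 /all_iotaP h2 /all_iotaP h3] /all_iotaP h4 /eqP h5].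
  apply/andP; split; apply/and3P; split => //; try (apply/eqP; lia).
  + apply/all_iotaP => j hj; rewrite psum_take (_ : minn j c.+1 = j); last lia.
    by have := h2 j ltac:(lia); have := h4 j ltac:(lia); lia.
  + by apply/all_iotaP => j hj; rewrite psum_drop; have := h2 (c.+1 + j) ltac:(lia); lia.
  + by apply/all_iotaP => j hj; rewrite psum_drop; have := h3 (c.+1 + j) ltac:(lia); lia.
Qed.

Lemma off_diag_first_return a s :
  off_diag a s + \sum_(c < a) (off_diag c s && (psum s c.+1 == c.+1)) = 1.
Proof.
elim: a => [|a IH]; first by rewrite big_ord0.
have -> : off_diag a.+1 s = off_diag a s && (psum s a.+1 != a.+1).
  by rewrite /off_diag -[a.+1]addn1 iotaD all_cat /= andbT add1n addn1.
rewrite big_ord_recr /= addnCA -IH addnC; congr (_ + _).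
by case: (off_diag a s); case: (psum s a.+1 == a.+1).
Qed.

Definition seq_of_ffun k M (n : {ffun 'I_k -> 'I_M}) : seq nat :=
  [seq (n o : nat) | o <- enum 'I_k].
Arguments seq_of_ffun {k M}.

Lemma size_seq_of_ffun {k M} (n : {ffun 'I_k -> 'I_M}) : size (seq_of_ffun n) = k.
Proof. by rewrite size_map size_enum_ord. Qed.

Lemma nth_seq_of_ffun {k M} (n : {ffun 'I_k -> 'I_M}) (o : 'I_k) :
  nth 0 (seq_of_ffun n) o = n o.
Proof. by rewrite (nth_map o) ?size_enum_ord // nth_ord_enum. Qed.

Lemma seq_of_ffun_inj k M : injective (@seq_of_ffun k M).
Proof.
move=> n1 n2 /(congr1 (fun s => nth 0 s)) eq_n; apply/ffunP => o; apply: val_inj.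
by have := congr1 (@^~ (val o)) eq_n; rewrite /= !nth_seq_of_ffun.
Qed.

Lemma perm_seq_of_ffun k M :
  perm_eq (map (@seq_of_ffun k M) (enum {ffun 'I_k -> 'I_M})) (bounded_seqs k M).
Proof.
have inj := @seq_of_ffun_inj k M.
apply: uniq_perm; rewrite ?bounded_seqs_uniq ?map_inj_uniq -?enumT ?enum_uniq //.
move=> s; rewrite mem_bounded_seqs; apply/mapP/idP.
  case=> n _ ->; rewrite size_seq_of_ffun eqxx /=.
  by apply/allP => x /mapP[o _ ->].
move=> /andP[/eqP size_s /allP sM].
have ltM (o : 'I_k) : nth 0 s o < M by apply: sM; rewrite mem_nth // size_s.
exists [ffun o => Ordinal (ltM o)]; first by rewrite mem_enum.
apply: (@eq_from_nth _ 0) => [|j]; rewrite ?size_seq_of_ffun // size_s => ltjk.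
by have := nth_seq_of_ffun [ffun o => Ordinal (ltM o)] (Ordinal ltjk); rewrite ffunE => ->.
Qed.

Lemma big_ffun_bounded_seqs (R : nmodType) k M (G : seq nat -> R) :
  (\sum_(n : {ffun 'I_k -> 'I_M}) G (seq_of_ffun n) = \sum_(s <- bounded_seqs k M) G s)%R.
Proof.
rewrite -(perm_big _ (perm_seq_of_ffun k M)) big_map big_enum /=.
by apply: eq_bigl => n; rewrite inE.
Qed.

Lemma psum_seq_of_ffun {k M} (n : {ffun 'I_k -> 'I_M}) j :
  psum (seq_of_ffun n) j = \sum_(l < k | l < j) n l.
Proof.
rewrite /psum /seq_of_ffun -map_take sumnE big_map.
have -> : take j (enum 'I_k) = [seq l : 'I_k <- enum 'I_k | l < j].
  apply: (inj_map val_inj); rewrite map_take val_enum_ord take_iota.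
  rewrite -(filter_map val (fun x => x < j)) val_enum_ord.
  case: (leqP j k) => hj; first by rewrite -(filter_iota_ltn 0 hj).
  by rewrite -[LHS]filter_predT; apply: eq_in_filter => x; rewrite mem_iota /=; lia.
by rewrite big_filter big_enum_cond.
Qed.

Lemma sumn_seq_of_ffun {k M} (n : {ffun 'I_k -> 'I_M}) :
  sumn (seq_of_ffun n) = \sum_(l < k) n l.
Proof.
rewrite -(@psum_oversize _ k) ?size_seq_of_ffun // psum_seq_of_ffun.
by apply: eq_bigl => l; rewrite ltn_ord.
Qed.

Lemma inS_Spath i k (n : {ffun 'I_k -> 'I_k.+1}) : 1 <= i <= k ->
  inS i k n = Spath (i - 1) (k - i) (seq_of_ffun n).
Proof.
move=> /andP[i_gt0 le_ik].
rewrite /inS /Spath sumn_seq_of_ffun (_ : i - 1 + (k - i) + 1 = k); last lia.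
have suffix_sum j : \sum_(l < k | j <= l) n l = \sum_(l < k) n l - psum (seq_of_ffun n) j.
  rewrite psum_seq_of_ffun [X in X - _](bigID (fun l : 'I_k => l < j)) /= addKn.
  by apply: eq_bigl => l; rewrite -leqNgt.
case/boolP: (_ == k) => //= /eqP sum_n.
have le_sum := psum_le_sumn (seq_of_ffun n); rewrite sumn_seq_of_ffun sum_n in le_sum.
apply/andP/andP => -[H1 H2]; split.
- apply/all_iotaP => j hj; have ltjk : j < k by lia.
  by move/forallP: H1 => /(_ (Ordinal ltjk)) /implyP /= H; rewrite psum_seq_of_ffun H //; lia.
- apply/all_iotaP => j hj; have ltjk : j < k by lia.
  move/forallP: H2 => /(_ (Ordinal ltjk)) /implyP /= /(_ ltac:(lia)).
  by rewrite suffix_sum sum_n; have := le_sum j; lia.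
- apply/forallP => j; apply/implyP => /andP[j_gt0 ltji]; have := ltn_ord j.
  by rewrite -psum_seq_of_ffun; move/all_iotaP: H1 => /(_ j) H ?; apply: H; lia.
- apply/forallP => j; apply/implyP => /andP[j_gt0 leij]; have := ltn_ord j => ltjk.
  rewrite suffix_sum sum_n; move/all_iotaP: H2 => /(_ j ltac:(lia)).
  by have := le_sum j; lia.
Qed.

Lemma all_leq_sumn s : all (fun x => x <= sumn s) s.
Proof. by apply/allP => x /perm_to_rem /perm_sumn /= ->; rewrite leq_addr. Qed.

Local Open Scope ring_scope.

Section WeightedPathSums.
Context {R : comNzSemiRingType} (w : nat -> R) (N : nat).

Definition path_weight (s : seq nat) := \prod_(x <- s) w x.

Definition Ssum a b :=
  \sum_(s <- bounded_seqs (a + b + 1) N | Spath a b s) path_weight s.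
Definition Ssum_weak a b :=
  \sum_(s <- bounded_seqs (a + b + 1) N | Spath_weak a b s) path_weight s.

Lemma big_pred_natr {I : Type} (l : seq I) (P : pred I) (F : I -> R) :
  \sum_(x <- l | P x) F x = \sum_(x <- l) (P x)%:R * F x.
Proof. by rewrite big_mkcond; apply: eq_bigr => x _; case: (P x); rewrite ?mul1r ?mul0r. Qed.

Lemma Ssum_weakC a b : Ssum_weak a b = Ssum_weak b a.
Proof.
rewrite /Ssum_weak [(b + a)%N]addnC big_pred_natr [RHS]big_pred_natr.
rewrite (big_bounded_seqs_involution _ revK); last first.
  by move=> s; rewrite !mem_bounded_seqs size_rev all_rev.
rewrite big_seq [RHS]big_seq; apply: eq_bigr => s.
rewrite mem_bounded_seqs => /andP[/eqP size_s _].
by rewrite Spath_weak_rev // /path_weight big_rev.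
Qed.

Lemma Ssum_rev_tail a b : (1 <= a)%N -> Ssum a b = Ssum b.+1 a.-1.
Proof.
move=> a_gt0; rewrite /Ssum (_ : (b.+1 + a.-1 + 1 = a + b + 1)%N); last lia.
rewrite big_pred_natr [RHS]big_pred_natr (big_bounded_seqs_involution _ rev_tailK).
  rewrite big_seq [RHS]big_seq; apply: eq_bigr => s.
  rewrite mem_bounded_seqs => /andP[/eqP size_s _].
  rewrite (Spath_rev_tail (rev_tail s) a_gt0) ?rev_tailK //.
    by case: s {size_s} => //= x t; rewrite /path_weight !big_cons big_rev.
  by case: s size_s => //= x t; rewrite size_rev.
by case=> [|x t]; rewrite !mem_bounded_seqs //= size_rev all_rev.
Qed.

Lemma Ssum_weak_first_return a b :
  Ssum_weak a b = Ssum a b + \sum_(c < a) Ssum c 0 * Ssum_weak (a - c.+1) b.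
Proof.
rewrite /Ssum_weak /Ssum big_pred_natr [in RHS]big_pred_natr.
have split_weight s :
    (Spath_weak a b s)%:R * path_weight s = (Spath a b s)%:R * path_weight s +
    \sum_(c < a) (Spath c 0 (take c.+1 s) &&
                  Spath_weak (a - c.+1) b (drop c.+1 s))%:R * path_weight s.
  rewrite -mulr_suml -mulrDl; congr (_ * _).
  under eq_bigr => c _ do rewrite Spath_weak_first_return ?ltn_ord //.
  rewrite SpathE; case: (Spath_weak a b s) => /=; last by rewrite big1 ?addr0.
  by rewrite -natr_sum -natrD off_diag_first_return.
rewrite (eq_bigr _ (fun s _ => split_weight s)) big_split /=; congr (_ + _).
rewrite exchange_big /=; apply: eq_bigr => c _; have lt_ca := ltn_ord c.
rewrite (_ : (a + b + 1 = c.+1 + (a - c.+1 + b + 1))%N); last lia.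
rewrite (_ : (c + 0 + 1 = c.+1)%N); last lia.
rewrite (big_pred_natr _ (Spath c 0)) (big_pred_natr _ (Spath_weak _ b)).
rewrite big_bounded_seqs_cat mulr_suml; apply: eq_big_seq => s1.
rewrite mem_bounded_seqs => /andP[/eqP size_s1 _].
rewrite mulr_sumr; apply: eq_bigr => s2 _.
rewrite -size_s1 take_size_cat // drop_size_cat // size_s1 /path_weight big_cat /=.
by case: (Spath c 0 s1); case: (Spath_weak _ b s2); rewrite /= ?mul1r ?mul0r ?mulr0.
Qed.

End WeightedPathSums.

Section FirstReturnAlgebra.
Context {R : comNzRingType} (g Z : nat -> nat -> R).
Hypothesis ZC : forall a b, Z a b = Z b a.
Hypothesis Z_first_return :
  forall a b, Z a b = g a b + \sum_(c < a) g c 0 * Z (a - c.+1) b.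
Hypothesis g_rev_tail : forall a b, (1 <= a)%N -> g a b = g b.+1 a.-1.

Lemma first_return_expand a b :
  g a b + \sum_(c < a) g c 0 * g b (a - c.+1) =
  Z a b - \sum_(c < a) \sum_(d < b) g c 0 * g d 0 * Z (a - c.+1) (b - d.+1).
Proof.
rewrite [Z a b]Z_first_return -addrA -sumrB; congr (_ + _); apply: eq_bigr => c _.
have -> : g b (a - c.+1) =
    Z b (a - c.+1) - \sum_(d < b) g d 0 * Z (b - d.+1) (a - c.+1).
  by rewrite Z_first_return addrK.
rewrite mulrBr ZC mulr_sumr; congr (_ - _); apply: eq_bigr => d _.
by rewrite mulrA ZC.
Qed.

Lemma first_return_sym a b :
  g a b + \sum_(j < a) g b j * g (a - j.+1) 0 =
  g b a + \sum_(j < b) g a j * g (b - j.+1) 0.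
Proof.
have rev_sum x y : \sum_(j < x) g y j * g (x - j.+1) 0 =
                   \sum_(c < x) g c 0 * g y (x - c.+1).
  rewrite (reindex_inj rev_ord_inj) /=; apply: eq_bigr => c _.
  by rewrite mulrC subnSK // subKn // ltnW.
rewrite !rev_sum !first_return_expand ZC exchange_big /=; congr (_ - _).
by apply: eq_bigr => d _; apply: eq_bigr => c _; rewrite ZC [g c 0 * _]mulrC.
Qed.

Lemma first_return_recursion a b :
  g a.+1 b = g a b.+1 + \sum_(j < a) g b.+1 j * g (a - j.+1) 0
                      - \sum_(j < b.+1) g a j * g (b.+1 - j.+1) 0.
Proof. by rewrite first_return_sym (g_rev_tail b.+1 a) // addrK. Qed.

End FirstReturnAlgebra.

Definition bern_weight (m : nat) : {poly rat} := (m`!)%:R^-1 *: bernp m.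

Lemma Ccoef_Ssum {i k} a b N : i = a.+1 -> k = (a + b).+1 -> (k < N)%N ->
  Ccoef i k = (-1) ^+ k * Ssum bern_weight N a b.
Proof.
move=> -> -> ltkN; rewrite /Ccoef /Ssum addn1; congr (_ * _).
rewrite (big_bounded_seqs_widen _ _ ltkN); last first.
  move=> s /and3P[/eqP sum_s _ _]; apply/allP => x /(allP (all_leq_sumn s)).
  by rewrite sum_s addn1.
rewrite [RHS]big_mkcond -big_ffun_bounded_seqs big_mkcond /=; apply: eq_bigr => n _.
rewrite inS_Spath ?subSS ?subn0 ?addKn; last lia.
by case: ifP => // _; rewrite /path_weight big_map big_enum; apply: eq_bigl.
Qed.

Lemma sum_Ccoef_mul {m r} a c N : m = a.+1 -> r = (m + c)%N -> (r < N)%N ->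
  \sum_(m <= k < r) Ccoef m k * Ccoef (r - k) (r - k) =
  (-1) ^+ r * \sum_(j < c) Ssum bern_weight N a j * Ssum bern_weight N (c - j.+1) 0.
Proof.
move=> -> -> ltrN; rewrite -{1}[a.+1]add0n big_addn addKn big_mkord mulr_sumr.
apply: eq_bigr => j _; have ltjc := ltn_ord j.
rewrite (Ccoef_Ssum a j N) ?(Ccoef_Ssum (c - j.+1) 0 N); [|lia..].
by rewrite mulrACA -exprD; congr (_ ^+ _ * _); lia.
Qed.

Theorem theorem6p1 (i r : nat) (hi1 : (1 <= i)%N) (hir : (i < r)%N) :
  Ccoef i.+1 r =
    Ccoef i r
    + \sum_(r - i + 1 <= k < r) Ccoef (r - i + 1) k * Ccoef (r - k) (r - k)
    - \sum_(i <= k < r) Ccoef i k * Ccoef (r - k) (r - k).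
Proof.
have [a ia] : exists a, i = a.+1 by exists i.-1; lia.
have [b rb] : exists b, r = (a + b).+2 by exists (r - i - 1)%N; lia.
have ltrN := ltnSn r.
rewrite (Ccoef_Ssum a.+1 b r.+1 _ _ ltrN); [|lia..].
rewrite (Ccoef_Ssum a b.+1 r.+1 _ _ ltrN); [|lia..].
rewrite (sum_Ccoef_mul b.+1 a r.+1 _ _ ltrN); [|lia..].
rewrite (sum_Ccoef_mul a b.+1 r.+1 _ _ ltrN); [|lia..].
rewrite (first_return_recursion _ _ (Ssum_weakC bern_weight r.+1)
  (Ssum_weak_first_return bern_weight r.+1) (Ssum_rev_tail bern_weight r.+1)).
by rewrite mulrBr mulrDr.
Qed.
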